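(* Let $H(X,Y,q)$ be the mirror curve polynomial described in the context, with Newton polygon $P$. There is $\epsilon>0$ such that for every $q\in(\mathbb{C}^* )^p$ with $|q_k|<\epsilon$ for all $k$, the (injective) map sending a connected component of $\mathbb{R}^2\setminus A_H$ to its order is surjective onto $P\cap\mathbb{Z}^2$; i.e. every lattice point of $P$ is the order of some connected component of $\mathbb{R}^2\setminus A_H$.
   Context: Let $P\subset\mathbb{R}^2$ be a convex lattice polygon with a unimodular triangulation $T_\Sigma$ (triangles with lattice vertices and area $1/2$; vertex set $P\cap\mathbb{Z}^2$), encoding a smooth toric Calabi–Yau 3-fold. Write $P\cap\mathbb{Z}^2=\{b_1,\dots,b_{p+3}\}$, $b_i=(m_i,n_i)$, with $b_1=(1,0)$, $b_2=(0,1)$, $b_3=(0,0)$ and $\sigma_1=\{b_1,b_2,b_3\}$ a triangle of $T_\Sigma$. Let $L=\ker(\mathbb{Z}^{p+3}\to\mathbb{Z}^3,\ e_i\mapsto(m_i,n_i,1))$, $D_i\in L^\vee$ the restriction of the $i$-th coordinate functional; for a triangle $\sigma$ with vertex index set $I'_\sigma$, $\{D_j:j\notin I'_\sigma\}$ is a basis of $L^\vee\otimes\mathbb{Q}$. Fix $H_1,\dots,H_p\in L^\vee\otimes\mathbb{Q}$ with $H_k=\sum_{j\notin I'_\sigma}s^\sigma_{k,j}D_j$, $s^\sigma_{k,j}\in\mathbb{Z}_{\ge0}$, $(s^\sigma_{k,j})$ nondegenerate, for every triangle $\sigma$. Set $a_i(q)=1$ ($i=1,2,3$), $a_i(q)=\prod_k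 q_k^{s^{\sigma_1}_{k,i}}$ ($i\ge4$), and $H(X,Y,q)=\sum_{i=1}^{p+3}a_i(q)X^{m_i}Y^{n_i}$. The amoeba of $H$ is $A_H=\mathrm{Log}(\{H=0\})\subset\mathbb{R}^2$, $\mathrm{Log}(x,y)=(\log|x|,\log|y|)$. For $w\in\mathbb{R}^2\setminus A_H$ its order is $v(w)\in\mathbb{Z}^2$, $v_j(w)=\frac{1}{(2\pi i)^2}\int_{\mathrm{Log}^{-1}(w)}\frac{z_j\partial_{z_j}H}{H}\frac{dz_1}{z_1}\wedge\frac{dz_2}{z_2}$ (with $z=(X,Y)$); it is constant on connected components of $\mathbb{R}^2\setminus A_H$, lies in $P$, and distinct components have distinct orders. *)

From Stdlib Require Import Reals QArith ZArith List Arith.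
From Coquelicot Require Import Coquelicot.
Import ListNotations.

Definition Rsum (n : nat) (f : nat -> R) : R := fold_right Rplus 0%R (map f (seq 0 n)).
Definition Qsum (n : nat) (f : nat -> Q) : Q := fold_right Qplus 0%Q (map f (seq 0 n)).
Definition Csum (n : nat) (f : nat -> C) : C := fold_right Cplus (RtoC 0) (map f (seq 0 n)).
Definition Cprod (n : nat) (f : nat -> C) : C := fold_right Cmult (RtoC 1) (map f (seq 0 n)).

Definition toR2 (z : Z * Z) : R * R := (IZR (fst z), IZR (snd z)).

Definition conv (pts : list (R * R)) (x : R * R) : Prop :=
  exists lam : list R,
    length lam = length pts /\
    List.Forall (fun l : R => (0 <= l)%R) lam /\
    fold_right Rplus 0%R lam = 1%R /\
    fold_right Rplus 0%R (map (fun lp => fst lp * fst (snd lp))%R (combine lam pts)) = fst x /\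
    fold_right Rplus 0%R (map (fun lp => fst lp * snd (snd lp))%R (combine lam pts)) = snd x.

(* The polygon P = conv{b_0,...,b_(N-1)} (0-based indexing of b_1..b_(p+3)). *)
Definition polyP (N : nat) (b : nat -> Z * Z) (x : R * R) : Prop :=
  conv (map (fun i => toR2 (b i)) (seq 0 N)) x.

Definition tri := (nat * nat * nat)%type.
Definition tri_idx (s : tri) : list nat := let '(i, j, k) := s in [i; j; k].
Definition in_trib (s : tri) (j : nat) : bool := existsb (Nat.eqb j) (tri_idx s).
Definition pts_of (b : nat -> Z * Z) (I : list nat) : list (R * R) :=
  map (fun i => toR2 (b i)) I.

Definition twice_area (b : nat -> Z * Z) (s : tri) : Z :=
  let '(i, j, k) := s in
  Z.abs ((fst (b j) - fst (b i)) * (snd (b k) - snd (b i))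
       - (snd (b j) - snd (b i)) * (fst (b k) - fst (b i)))%Z.

Definition lattice_points_of_P (N : nat) (b : nat -> Z * Z) : Prop :=
  (forall i j, (i < N)%nat -> (j < N)%nat -> b i = b j -> i = j) /\
  (forall z : Z * Z, polyP N b (toR2 z) -> exists i, (i < N)%nat /\ b i = z).

Definition unimodular_triangulation (N : nat) (b : nat -> Z * Z) (T : list tri) : Prop :=
  (forall s, In s T -> forall i, In i (tri_idx s) -> (i < N)%nat) /\
  (forall s, In s T -> twice_area b s = 1%Z) /\
  (forall x, polyP N b x -> exists s, In s T /\ conv (pts_of b (tri_idx s)) x) /\
  (forall s x, In s T -> conv (pts_of b (tri_idx s)) x -> polyP N b x) /\
  (* two triangles meet in a common face (conv of their common vertices) *)
  (forall s t x, In s T -> In t T ->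
     (conv (pts_of b (tri_idx s)) x /\ conv (pts_of b (tri_idx t)) x <->
      conv (pts_of b (filter (in_trib t) (tri_idx s))) x)) /\
  (forall i, (i < N)%nat -> exists s, In s T /\ In i (tri_idx s)).

(* l ∈ L ⊗ Q = ker (Q^N -> Q^3, e_i |-> (m_i, n_i, 1)) *)
Definition inLQ (N : nat) (b : nat -> Z * Z) (l : nat -> Q) : Prop :=
  Qsum N (fun i => l i * inject_Z (fst (b i)))%Q == 0%Q /\
  Qsum N (fun i => l i * inject_Z (snd (b i)))%Q == 0%Q /\
  Qsum N l == 0%Q.

(* Elements of L^∨ ⊗ Q = Hom(L ⊗ Q, Q) are represented by vectors h ∈ Q^N
   (acting by the dot product); D_j is represented by e_j.
   "H_k = sum_{j ∉ σ} s^σ_{k,j} D_j in L^∨ ⊗ Q" : *)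
Definition H_expansion (N p : nat) (b : nat -> Z * Z) (h : nat -> nat -> Q)
    (s : tri -> nat -> nat -> nat) (sg : tri) : Prop :=
  forall k, (k < p)%nat -> forall l, inLQ N b l ->
    Qsum N (fun i => h k i * l i)%Q
    == Qsum N (fun j => if in_trib sg j then 0%Q
                        else (inject_Z (Z.of_nat (s sg k j)) * l j)%Q).

(* the p x p matrix (s^σ_{k,j})_{k, j ∉ σ} is nondegenerate (trivial left kernel) *)
Definition nondegenerate (N p : nat) (s : tri -> nat -> nat -> nat) (sg : tri) : Prop :=
  forall c : nat -> Q,
    (forall j, (j < N)%nat -> in_trib sg j = false ->
       Qsum p (fun k => c k * inject_Z (Z.of_nat (s sg k j)))%Q == 0%Q) ->
    forall k, (k < p)%nat -> c k == 0%Q.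

Definition sigma1 : tri := (0%nat, 1%nat, 2%nat).

Definition mirror_setup (p : nat) (b : nat -> Z * Z) (T : list tri)
    (h : nat -> nat -> Q) (s : tri -> nat -> nat -> nat) : Prop :=
  b 0%nat = (1%Z, 0%Z) /\ b 1%nat = (0%Z, 1%Z) /\ b 2%nat = (0%Z, 0%Z) /\
  lattice_points_of_P (p + 3) b /\
  unimodular_triangulation (p + 3) b T /\
  In sigma1 T /\
  (forall sg, In sg T -> H_expansion (p + 3) p b h s sg /\ nondegenerate (p + 3) p s sg).

Definition Cpowz (z : C) (m : Z) : C :=
  match m with
  | Z0 => RtoC 1
  | Zpos n => Cpow z (Pos.to_nat n)
  | Zneg n => Cinv (Cpow z (Pos.to_nat n))
  end.

(* a_i(q) (0-based: a_0 = a_1 = a_2 = 1) *)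
Definition coef_a (p : nat) (s : tri -> nat -> nat -> nat) (q : nat -> C) (i : nat) : C :=
  if (i <? 3)%nat then RtoC 1 else Cprod p (fun k => Cpow (q k) (s sigma1 k i)).

Definition monom (b : nat -> Z * Z) (i : nat) (X Y : C) : C :=
  Cmult (Cpowz X (fst (b i))) (Cpowz Y (snd (b i))).

Definition Hpoly (N : nat) (b : nat -> Z * Z) (a : nat -> C) (X Y : C) : C :=
  Csum N (fun i => Cmult (a i) (monom b i X Y)).

Definition XdH (N : nat) (b : nat -> Z * Z) (a : nat -> C) (X Y : C) : C :=
  Csum N (fun i => Cmult (Cmult (a i) (RtoC (IZR (fst (b i))))) (monom b i X Y)).
Definition YdH (N : nat) (b : nat -> Z * Z) (a : nat -> C) (X Y : C) : C :=
  Csum N (fun i => Cmult (Cmult (a i) (RtoC (IZR (snd (b i))))) (monom b i X Y)).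

Definition amoeba (N : nat) (b : nat -> Z * Z) (a : nat -> C) (w : R * R) : Prop :=
  exists X Y : C, X <> RtoC 0 /\ Y <> RtoC 0 /\ Hpoly N b a X Y = RtoC 0 /\
    ln (Cmod X) = fst w /\ ln (Cmod Y) = snd w.

Definition circ (r t : R) : C := (exp r * cos t, exp r * sin t)%R.

(* v_j(w) = 1/(2πi)^2 ∫_{Log^{-1}(w)} (z_j ∂_{z_j} H / H) dz1/z1 ∧ dz2/z2,
   with Log^{-1}(w) parametrized by (θ1,θ2) ∈ [0,2π]^2, z_k = e^{w_k + i θ_k},
   so dz1/z1 ∧ dz2/z2 = (i dθ1) ∧ (i dθ2) (standard orientation). *)
Definition order_coord (N : nat) (b : nat -> Z * Z) (a : nat -> C)
    (G : C -> C -> C) (w : R * R) : C :=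
  Cmult (Cinv (Cpow (Cmult (RtoC (2 * PI)) Ci) 2))
   (RInt (V := C_R_CompleteNormedModule)
      (fun t1 => RInt (V := C_R_CompleteNormedModule)
         (fun t2 => let X := circ (fst w) t1 in let Y := circ (snd w) t2 in
                    Cmult (Cdiv (G X Y) (Hpoly N b a X Y)) (Cmult Ci Ci))
         0 (2 * PI))
      0 (2 * PI)).

Definition amoeba_order (N : nat) (b : nat -> Z * Z) (a : nat -> C) (w : R * R) : C * C :=
  (order_coord N b a (XdH N b a) w, order_coord N b a (YdH N b a) w).

(* For small [q] the coefficient [a_j] has size [exp (- nu_j)], where
   [nu = sum_k (- ln |q_k|) s^{sigma_1}_{k,.}].  Rewriting the [H_k] over a triangle [sigma]
   containing [b_i] changes [nu] only by an affine function of [b_j], since both expansions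
   represent [H_k] on [L]; the new weight [mu] vanishes on [sigma] and, by nondegeneracy, is at
   least [min_k (- ln |q_k|)] off [sigma].  As [sigma] is unimodular, some linear form takes the
   value [-2] on the two other vertices of [sigma] relative to [b_i] and is bounded on [P], so
   there is a point [w] at which the [i]-th monomial dominates the sum of all the others.
   Then [H] has no zero on [Log^{-1}(w)], and writing [H = c X^{m_i} Y^{n_i} (1 + u)] with
   [|u| < 1], the order integrand is [b_i] plus a logarithmic derivative of the doubly periodic
   function [1 + u], whose integral over the torus vanishes. *)

From Stdlib Require Import Reals QArith ZArith List Arith.
From Coquelicot Require Import Coquelicot.
From Stdlib Require Import Lra Lia Qreals Classical.
Open Scope R_scope.

Lemma fold_right_map_seq_S {A : Type} (op : A -> A -> A) (e : A) (f : nat -> A) n :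
  (forall x y z, op x (op y z) = op (op x y) z) ->
  (forall x, op e x = x) -> (forall x, op x e = x) ->
  fold_right op e (map f (seq 0 (S n))) = op (fold_right op e (map f (seq 0 n))) (f n).
Proof.
  intros Hassoc Hl Hr. rewrite seq_S, map_app, fold_right_app. simpl. rewrite Hr.
  induction (map f (seq 0 n)) as [|x l IH]; simpl; [now rewrite Hl|].
  now rewrite IH, Hassoc.
Qed.

Lemma Rsum_S n f : Rsum (S n) f = Rsum n f + f n.
Proof.
  apply fold_right_map_seq_S; intros; ring.
Qed.

Lemma Rsum_ext n f g : (forall j, (j < n)%nat -> f j = g j) -> Rsum n f = Rsum n g.
Proof.
  induction n; intros H; [reflexivity|]. rewrite !Rsum_S, IHn, H; auto.
Qed.

Lemma Rsum_plus n f g : Rsum n (fun j => f j + g j) = Rsum n f + Rsum n g.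
Proof. induction n; [unfold Rsum; simpl; ring|]. rewrite !Rsum_S, IHn; ring. Qed.

Lemma Rsum_scal n c f : Rsum n (fun j => c * f j) = c * Rsum n f.
Proof. induction n; [unfold Rsum; simpl; ring|]. rewrite !Rsum_S, IHn; ring. Qed.

Lemma Rsum_opp n f : Rsum n (fun j => - f j) = - Rsum n f.
Proof. induction n; [unfold Rsum; simpl; ring|]. rewrite !Rsum_S, IHn; ring. Qed.

Lemma Rsum_const n c : Rsum n (fun _ => c) = INR n * c.
Proof. induction n; [unfold Rsum; simpl; ring|]. rewrite Rsum_S, IHn, S_INR; ring. Qed.

Lemma Rsum_le n f g : (forall j, (j < n)%nat -> f j <= g j) -> Rsum n f <= Rsum n g.
Proof.
  induction n; intros H; [unfold Rsum; simpl; lra|]. rewrite !Rsum_S.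
  assert (f n <= g n) by (apply H; lia).
  assert (Rsum n f <= Rsum n g) by (apply IHn; intros; apply H; lia). lra.
Qed.

Lemma Rsum_nonneg n f : (forall j, (j < n)%nat -> 0 <= f j) -> 0 <= Rsum n f.
Proof.
  intros H. apply Rle_trans with (Rsum n (fun _ => 0)).
  - rewrite Rsum_const; lra.
  - now apply Rsum_le.
Qed.

Lemma Rsum_indicator n i f : (i < n)%nat ->
  Rsum n (fun j => if Nat.eqb j i then f j else 0) = f i.
Proof.
  induction n; intros H; [lia|]. rewrite Rsum_S.
  destruct (Nat.eqb_spec n i) as [<-|Hne].
  - rewrite (Rsum_ext _ _ (fun _ => 0)), Rsum_const; [ring|].
    intros j Hj. destruct (Nat.eqb_spec j n); [lia|auto].
  - rewrite IHn; [ring|lia].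
Qed.

Lemma Rsum_term_le n f i : (forall j, (j < n)%nat -> 0 <= f j) -> (i < n)%nat ->
  f i <= Rsum n f.
Proof.
  intros H Hi. rewrite <- (Rsum_indicator n i f) at 1 by auto. apply Rsum_le.
  intros j Hj. destruct (Nat.eqb_spec j i); [lra|apply H; auto].
Qed.

Lemma Q2R_Qsum n f : Q2R (Qsum n f) = Rsum n (fun j => Q2R (f j)).
Proof.
  unfold Qsum, Rsum. rewrite <- (map_map f Q2R).
  induction (map f (seq 0 n)) as [|x l IH]; simpl.
  - unfold Q2R; simpl; field.
  - now rewrite Q2R_plus, IH.
Qed.

Lemma Csum_S n f : Csum (S n) f = Cplus (Csum n f) (f n).
Proof.
  apply fold_right_map_seq_S; intros; ring.
Qed.

Lemma Csum_ext n f g : (forall j, (j < n)%nat -> f j = g j) -> Csum n f = Csum n g.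
Proof.
  induction n; intros H; [reflexivity|]. rewrite !Csum_S, IHn, H; auto.
Qed.

Lemma Csum_plus n f g : Csum n (fun j => Cplus (f j) (g j)) = Cplus (Csum n f) (Csum n g).
Proof. induction n; [unfold Csum; simpl; ring|]. rewrite !Csum_S, IHn; ring. Qed.

Lemma Csum_scal n c f : Csum n (fun j => Cmult c (f j)) = Cmult c (Csum n f).
Proof. induction n; [unfold Csum; simpl; ring|]. rewrite !Csum_S, IHn; ring. Qed.

Lemma Csum_indicator n i c : (i < n)%nat ->
  Csum n (fun j => if Nat.eqb j i then c else RtoC 0) = c.
Proof.
  induction n; intros H; [lia|]. rewrite Csum_S.
  destruct (Nat.eqb_spec n i) as [<-|Hne].
  - rewrite (Csum_ext _ _ (fun _ => Cmult (RtoC 0) (RtoC 0))), Csum_scal; [ring|].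
    intros j Hj. destruct (Nat.eqb_spec j n); [lia|ring].
  - rewrite IHn; [ring|lia].
Qed.

Lemma Csum_fst n f : fst (Csum n f) = Rsum n (fun j => fst (f j)).
Proof. induction n; [reflexivity|]. rewrite Csum_S, Rsum_S, <- IHn. reflexivity. Qed.

Lemma Csum_snd n f : snd (Csum n f) = Rsum n (fun j => snd (f j)).
Proof. induction n; [reflexivity|]. rewrite Csum_S, Rsum_S, <- IHn. reflexivity. Qed.

Lemma Cmod_Csum_le n f : Cmod (Csum n f) <= Rsum n (fun j => Cmod (f j)).
Proof.
  induction n.
  - unfold Csum, Rsum; simpl. rewrite Cmod_0. lra.
  - rewrite Csum_S, Rsum_S. eapply Rle_trans; [apply Cmod_triangle|lra].
Qed.

Lemma Csum_extract n f i : (i < n)%nat ->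
  Csum n f = Cplus (f i) (Csum n (fun j => if Nat.eqb j i then RtoC 0 else f j)).
Proof.
  intros H. rewrite <- (Csum_indicator n i (f i)) by auto. rewrite <- Csum_plus.
  apply Csum_ext. intros j _. destruct (Nat.eqb_spec j i) as [->|]; ring.
Qed.

Lemma Cprod_S n f : Cprod (S n) f = Cmult (Cprod n f) (f n).
Proof.
  apply fold_right_map_seq_S; intros; ring.
Qed.

Lemma RtoC_neq_0 r : r <> 0 -> RtoC r <> RtoC 0.
Proof. intros H E. apply H. apply (f_equal fst) in E. auto. Qed.

Lemma Cmod_circ r t : Cmod (circ r t) = exp r.
Proof.
  unfold circ, Cmod; simpl fst; simpl snd.
  replace ((exp r * cos t) ^ 2 + (exp r * sin t) ^ 2) with (exp r ^ 2).
  - apply sqrt_pow2. left; apply exp_pos.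
  - pose proof (sin2_cos2 t) as E. unfold Rsqr in E. nra.
Qed.

Lemma circ_neq_0 r t : circ r t <> RtoC 0.
Proof.
  intro E. apply (f_equal Cmod) in E. rewrite Cmod_circ, Cmod_0 in E.
  pose proof (exp_pos r); lra.
Qed.

Lemma circ_mult r t r' t' : Cmult (circ r t) (circ r' t') = circ (r + r') (t + t').
Proof.
  unfold circ; apply injective_projections; simpl; rewrite ?exp_plus, ?cos_plus, ?sin_plus; ring.
Qed.

Lemma circ_0 : circ 0 0 = RtoC 1.
Proof. unfold circ. rewrite exp_0, cos_0, sin_0. apply injective_projections; simpl; ring. Qed.

Lemma circ_inv r t : Cinv (circ r t) = circ (- r) (- t).
Proof.
  assert (Hm : Cmult (circ r t) (circ (- r) (- t)) = RtoC 1).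
  { rewrite circ_mult, <- circ_0. f_equal; ring. }
  rewrite <- (Cmult_1_r (Cinv (circ r t))), <- Hm. field. apply circ_neq_0.
Qed.

Lemma Cpow_circ r t n : Cpow (circ r t) n = circ (INR n * r) (INR n * t).
Proof.
  induction n; simpl Cpow.
  - rewrite !Rmult_0_l. symmetry. apply circ_0.
  - rewrite IHn, circ_mult, S_INR. f_equal; ring.
Qed.

Lemma Cpowz_circ r t m : Cpowz (circ r t) m = circ (IZR m * r) (IZR m * t).
Proof.
  destruct m; simpl Cpowz.
  - rewrite !Rmult_0_l. symmetry. apply circ_0.
  - rewrite Cpow_circ, INR_IPR. reflexivity.
  - rewrite Cpow_circ, circ_inv, INR_IPR. f_equal; unfold IZR; ring.
Qed.

Lemma circ_2PI_multiple (k : Z) : circ 0 (IZR k * (2 * PI)) = RtoC 1.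
Proof.
  replace 0 with (IZR k * 0) by ring. rewrite <- Cpowz_circ.
  replace (circ 0 (2 * PI)) with (RtoC 1)
    by (unfold circ; rewrite exp_0, cos_2PI, sin_2PI; apply injective_projections; simpl; ring).
  destruct k; simpl Cpowz; rewrite ?Cpow_1_l; [reflexivity|reflexivity|].
  unfold Cinv. apply injective_projections; simpl; field.
Qed.

Lemma circ_0_plus t t' : circ 0 (t + t') = Cmult (circ 0 t) (circ 0 t').
Proof. rewrite circ_mult, Rplus_0_r. reflexivity. Qed.

Lemma circ_add_2PI_multiple (k : Z) t : circ 0 (t + IZR k * (2 * PI)) = circ 0 t.
Proof. rewrite circ_0_plus, circ_2PI_multiple. apply Cmult_1_r. Qed.

Definition rho (b : nat -> Z * Z) (w : R * R) (j : nat) : R :=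
  IZR (fst (b j)) * fst w + IZR (snd (b j)) * snd w.

Lemma monom_circ b j r1 t1 r2 t2 :
  monom b j (circ r1 t1) (circ r2 t2) = circ (rho b (r1, r2) j) (rho b (t1, t2) j).
Proof. unfold monom. rewrite !Cpowz_circ, circ_mult. reflexivity. Qed.

Lemma circ_scale r t : circ r t = Cmult (RtoC (exp r)) (circ 0 t).
Proof. unfold circ; rewrite exp_0; apply injective_projections; simpl; ring. Qed.

Lemma Cmod_Cpowz X m : X <> RtoC 0 -> Cmod (Cpowz X m) = exp (IZR m * ln (Cmod X)).
Proof.
  intros HX. assert (Hp : 0 < Cmod X) by (apply Cmod_gt_0; auto).
  assert (Hpow : forall n, Cmod X ^ n = exp (INR n * ln (Cmod X))).
  { intros n. rewrite <- ln_pow, exp_ln by (auto; apply pow_lt; auto). reflexivity. }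
  destruct m as [|k|k]; simpl Cpowz.
  - rewrite Cmod_1, Rmult_0_l, exp_0; auto.
  - rewrite Cmod_pow, Hpow, INR_IPR; auto.
  - assert (Hk : Cpow X (Pos.to_nat k) <> RtoC 0) by (apply Cpow_nz; auto).
    rewrite Cmod_inv, Cmod_pow, Hpow, INR_IPR, <- exp_Ropp by auto.
    f_equal. unfold IZR. ring.
Qed.

Lemma Cmod_monom b j X Y : X <> RtoC 0 -> Y <> RtoC 0 ->
  Cmod (monom b j X Y) = exp (rho b (ln (Cmod X), ln (Cmod Y)) j).
Proof. intros. unfold monom, rho. rewrite Cmod_mult, !Cmod_Cpowz, exp_plus; auto. Qed.

(** * Logarithmic derivatives on the torus *)

Lemma continuous_section (g : R -> R -> R) x y :
  continuity_2d_pt g x y -> continuous (fun z => g x z) y.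
Proof.
  intros H. apply continuity_pt_filterlim, continuity_pt_locally. intros eps.
  destruct (H eps) as [d Hd]. exists d. intros v Hv. apply Hd; [|apply Hv].
  rewrite Rminus_eq_0, Rabs_R0; apply cond_pos.
Qed.

Lemma ex_RInt_section (g : R -> R -> R) a b x :
  (forall x y, continuity_2d_pt g x y) -> ex_RInt (fun y => g x y) a b.
Proof.
  intros H. apply (ex_RInt_continuous (V := R_CompleteNormedModule)).
  intros z _. apply continuous_section, H.
Qed.

Lemma continuous_RInt_section (g : R -> R -> R) a b x : a <= b ->
  (forall x y, continuity_2d_pt g x y) ->
  continuous (fun x => RInt (fun y => g x y) a b) x.
Proof.
  intros Hab H. apply continuity_pt_filterlim, continuity_pt_locally. intros eps.
  set (M := eps / (b - a + 1)).
  assert (HM : 0 < M) by (apply Rdiv_lt_0_compat; [apply cond_pos|lra]).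
  destruct (uniform_continuity_2d g (x - 1) (x + 1) a b
              (fun u v _ _ => H u v) (mkposreal _ HM)) as [d Hd].
  assert (Hd1 : 0 < Rmin d 1) by (apply Rmin_pos; [apply cond_pos|lra]).
  exists (mkposreal _ Hd1). intros u Hu.
  change (Rabs (u - x) < Rmin d 1) in Hu.
  pose proof (Rmin_l d 1). pose proof (Rmin_r d 1).
  change (Rabs (RInt (fun y => g u y) a b - RInt (fun y => g x y) a b) < eps).
  rewrite <- (RInt_minus (V := R_CompleteNormedModule)) by (apply ex_RInt_section; auto).
  eapply Rle_lt_trans.
  - apply abs_RInt_le_const with (M := M); [lra| |].
    + apply (ex_RInt_minus (V := R_NormedModule)); apply ex_RInt_section; auto.
    + intros t Ht. left. apply (Hd x t u t); try lra.
      * apply Rabs_lt_between' in Hu. lra.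
      * rewrite Rminus_eq_0, Rabs_R0; apply cond_pos.
  - unfold M. apply Rmult_lt_reg_r with (b - a + 1); [lra|].
    replace ((b - a) * (eps / (b - a + 1)) * (b - a + 1)) with ((b - a) * eps)
      by (field; lra).
    pose proof (cond_pos eps). nra.
Qed.

Lemma is_RInt_derive_periodic (f f' : R -> R) a b :
  (forall x, is_derive f x (f' x)) -> (forall x, continuous f' x) -> f a = f b ->
  is_RInt f' a b 0.
Proof.
  intros Hd Hc Hper.
  pose proof (is_RInt_derive f f' a b (fun x _ => Hd x) (fun x _ => Hc x)) as H.
  rewrite Hper, minus_eq_zero in H. exact H.
Qed.

Lemma is_RInt_RInt_derive_periodic (f fx fy : R -> R -> R) a b c d : c <= d ->
  (forall x y, is_derive (fun z => f z y) x (fx x y)) ->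
  (forall x y, is_derive (fun z => f x z) y (fy x y)) ->
  (forall x y, continuity_2d_pt fx x y) ->
  (forall y, f a y = f b y) ->
  is_RInt (fun x => RInt (fun y => fx x y) c d) a b 0.
Proof.
  intros Hcd Hx Hy Cx Per.
  set (Phi := fun x => RInt (fun y => f x y) c d).
  assert (HD : forall x, is_derive Phi x (RInt (fun y => fx x y) c d)).
  { intros x.
    replace (RInt (fun y => fx x y) c d)
      with (RInt (fun t => Derive (fun u => f u t) x) c d)
      by (apply RInt_ext; intros t _; apply is_derive_unique, Hx).
    apply (is_derive_RInt_param (fun u t => f u t)).
    - apply filter_forall. intros x0 t _. eexists; apply Hx.
    - intros t _. apply continuity_2d_pt_ext with fx; auto.
      intros. symmetry. apply is_derive_unique, Hx.
    - apply filter_forall. intros y.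
      apply (ex_RInt_continuous (V := R_CompleteNormedModule)). intros z _.
      apply (ex_derive_continuous (K := R_AbsRing) (V := R_NormedModule) (fun t => f y t)).
      eexists; apply Hy. }
  apply (is_RInt_derive_periodic Phi); auto.
  - intros x. apply continuous_RInt_section; auto.
  - unfold Phi. apply RInt_ext. intros; apply Per.
Qed.

Definition torus_integral_zero (f : R -> R -> C) : Prop :=
  (forall x, ex_RInt (V := C_R_CompleteNormedModule) (fun y => f x y) 0 (2 * PI)) /\
  is_RInt (V := C_R_CompleteNormedModule)
    (fun x => RInt (V := C_R_CompleteNormedModule) (fun y => f x y) 0 (2 * PI))
    0 (2 * PI) (RtoC 0).

Lemma is_RInt_C_of_components (f : R -> C) a b (l : C) :
  is_RInt (fun t => fst (f t)) a b (fst l) -> is_RInt (fun t => snd (f t)) a b (snd l) ->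
  is_RInt (V := C_R_CompleteNormedModule) f a b l.
Proof.
  intros H1 H2. destruct l as [l1 l2].
  apply (is_RInt_fct_extend_pair (U := R_NormedModule) (V := R_NormedModule)); auto.
Qed.

Lemma RInt_C_components (f : R -> C) a b :
  ex_RInt (fun t => fst (f t)) a b -> ex_RInt (fun t => snd (f t)) a b ->
  is_RInt (V := C_R_CompleteNormedModule) f a b
    (RInt (fun t => fst (f t)) a b, RInt (fun t => snd (f t)) a b).
Proof.
  intros H1 H2. apply is_RInt_C_of_components; apply (RInt_correct (V := R_CompleteNormedModule)); auto.
Qed.

Lemma is_RInt_zero a b : is_RInt (fun _ : R => 0) a b 0.
Proof.
  pose proof (is_RInt_const (V := R_NormedModule) a b 0) as H.
  change (scal (b - a) 0) with ((b - a) * 0) in H. rewrite Rmult_0_r in H. exact H.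
Qed.

Lemma torus_integral_zero_of_sections (f : R -> R -> C) :
  (forall x, is_RInt (V := C_R_CompleteNormedModule) (fun y => f x y) 0 (2 * PI) (RtoC 0)) ->
  torus_integral_zero f.
Proof.
  intros H. split.
  - intros x. eexists. apply H.
  - apply (is_RInt_ext (V := C_R_CompleteNormedModule) (fun _ => RtoC 0)).
    + intros x _. symmetry. apply (is_RInt_unique (V := C_R_CompleteNormedModule)), H.
    + apply is_RInt_C_of_components; apply is_RInt_zero.
Qed.


Lemma Cdiv_pair (w : C) p q :
  Cdiv w (p, q) = ((p * fst w + q * snd w) / (p ^ 2 + q ^ 2),
                   (p * snd w - q * fst w) / (p ^ 2 + q ^ 2)).
Proof. unfold Cdiv, Cinv, Rdiv. apply injective_projections; simpl; ring. Qed.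

Lemma is_derive_atan_ratio (P Q : R -> R) (w : C) x : 0 < P x ->
  is_derive P x (- snd w) -> is_derive Q x (fst w) ->
  is_derive (fun z => atan (Q z / P z)) x (fst (Cdiv w (P x, Q x))).
Proof.
  intros Hp HP HQ. rewrite Cdiv_pair. simpl fst. auto_derive.
  - repeat split; [eexists; apply HQ | eexists; apply HP | lra].
  - replace (Derive (fun z => P z) x) with (- snd w) by (symmetry; now apply is_derive_unique).
    replace (Derive (fun z => Q z) x) with (fst w) by (symmetry; now apply is_derive_unique).
    field. split; nra.
Qed.

Lemma is_derive_log_norm (P Q : R -> R) (w : C) x : 0 < P x ->
  is_derive P x (- snd w) -> is_derive Q x (fst w) ->
  is_derive (fun z => - (ln (P z ^ 2 + Q z ^ 2) / 2)) x (snd (Cdiv w (P x, Q x))).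
Proof.
  intros Hp HP HQ. rewrite Cdiv_pair. simpl snd. auto_derive.
  - repeat split; [eexists; apply HP | eexists; apply HQ | nra].
  - replace (Derive (fun z => P z) x) with (- snd w) by (symmetry; now apply is_derive_unique).
    replace (Derive (fun z => Q z) x) with (fst w) by (symmetry; now apply is_derive_unique).
    field. nra.
Qed.

(* [Wx] and [Wy] are the partial derivatives of [F = P + iQ] divided by [i].  As [P > 0],
   [atan (Q / P)] is a continuous argument of [F], and the real and imaginary parts of
   [Wx / F] are the [x]-derivatives of the doubly periodic functions [atan (Q / P)] and
   [- ln |F|]. *)
Section LogarithmicDerivative.

Variables (P Q : R -> R -> R) (Wx Wy : R -> R -> C).

Hypothesis P_pos : forall x y, 0 < P x y.
Hypothesis P_cont : forall x y, continuity_2d_pt P x y.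
Hypothesis Q_cont : forall x y, continuity_2d_pt Q x y.
Hypothesis Wx_cont : forall x y,
  continuity_2d_pt (fun u v => fst (Wx u v)) x y /\ continuity_2d_pt (fun u v => snd (Wx u v)) x y.
Hypothesis Wy_cont : forall x y,
  continuity_2d_pt (fun u v => fst (Wy u v)) x y /\ continuity_2d_pt (fun u v => snd (Wy u v)) x y.
Hypothesis P_dx : forall x y, is_derive (fun z => P z y) x (- snd (Wx x y)).
Hypothesis Q_dx : forall x y, is_derive (fun z => Q z y) x (fst (Wx x y)).
Hypothesis P_dy : forall x y, is_derive (fun z => P x z) y (- snd (Wy x y)).
Hypothesis Q_dy : forall x y, is_derive (fun z => Q x z) y (fst (Wy x y)).
Hypothesis P_periodic : forall t, P 0 t = P (2 * PI) t /\ P t 0 = P t (2 * PI).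
Hypothesis Q_periodic : forall t, Q 0 t = Q (2 * PI) t /\ Q t 0 = Q t (2 * PI).

Lemma log_quotient_continuous (W : R -> R -> C) :
  (forall x y, continuity_2d_pt (fun u v => fst (W u v)) x y /\
               continuity_2d_pt (fun u v => snd (W u v)) x y) ->
  forall x y,
    continuity_2d_pt (fun u v => fst (Cdiv (W u v) (P u v, Q u v))) x y /\
    continuity_2d_pt (fun u v => snd (Cdiv (W u v) (P u v, Q u v))) x y.
Proof.
  intros HW x y. destruct (HW x y) as [W1 W2].
  assert (Hinv : continuity_2d_pt (fun u v => / (P u v * P u v + Q u v * Q u v)) x y).
  { apply continuity_2d_pt_inv.
    - apply continuity_2d_pt_plus; apply continuity_2d_pt_mult; auto.
    - pose proof (P_pos x y). nra. }
  split.
  - apply continuity_2d_pt_ext with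
      (fun u v => (P u v * fst (W u v) + Q u v * snd (W u v)) * / (P u v * P u v + Q u v * Q u v)).
    + intros u v. rewrite Cdiv_pair. simpl. unfold Rdiv. now rewrite !Rmult_1_r.
    + apply continuity_2d_pt_mult; auto.
      apply continuity_2d_pt_plus; apply continuity_2d_pt_mult; auto.
  - apply continuity_2d_pt_ext with
      (fun u v => (P u v * snd (W u v) - Q u v * fst (W u v)) * / (P u v * P u v + Q u v * Q u v)).
    + intros u v. rewrite Cdiv_pair. simpl. unfold Rdiv. now rewrite !Rmult_1_r.
    + apply continuity_2d_pt_mult; auto.
      apply continuity_2d_pt_minus; apply continuity_2d_pt_mult; auto.
Qed.

Lemma log_quotient_x_torus_integral :
  torus_integral_zero (fun x y => Cdiv (Wx x y) (P x y, Q x y)).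
Proof.
  pose proof (log_quotient_continuous Wx Wx_cont) as C.
  set (f1 := fun u v => fst (Cdiv (Wx u v) (P u v, Q u v))).
  set (f2 := fun u v => snd (Cdiv (Wx u v) (P u v, Q u v))).
  assert (Hin : forall x, is_RInt (V := C_R_CompleteNormedModule)
                  (fun y => Cdiv (Wx x y) (P x y, Q x y)) 0 (2 * PI)
                  (RInt (fun y => f1 x y) 0 (2 * PI), RInt (fun y => f2 x y) 0 (2 * PI))).
  { intros x. apply RInt_C_components.
    - apply (ex_RInt_section f1). apply C.
    - apply (ex_RInt_section f2). apply C. }
  pose proof PI_RGT_0.
  split.
  - intros x. eexists. apply Hin.
  - apply (is_RInt_ext (V := C_R_CompleteNormedModule)
             (fun x => (RInt (fun y => f1 x y) 0 (2 * PI), RInt (fun y => f2 x y) 0 (2 * PI)))).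
    + intros x _. symmetry. apply (is_RInt_unique (V := C_R_CompleteNormedModule)), Hin.
    + apply is_RInt_C_of_components; cbn [fst snd RtoC].
      * apply (is_RInt_RInt_derive_periodic (fun u v => atan (Q u v / P u v)) f1
                 (fun x y => fst (Cdiv (Wy x y) (P x y, Q x y)))); try lra.
        -- intros x y. apply (is_derive_atan_ratio (fun z => P z y) (fun z => Q z y)); auto.
        -- intros x y. apply (is_derive_atan_ratio (fun z => P x z) (fun z => Q x z)); auto.
        -- apply C.
        -- intros y. now rewrite (proj1 (P_periodic y)), (proj1 (Q_periodic y)).
      * apply (is_RInt_RInt_derive_periodic (fun u v => - (ln (P u v ^ 2 + Q u v ^ 2) / 2)) f2
                 (fun x y => snd (Cdiv (Wy x y) (P x y, Q x y)))); try lra.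
        -- intros x y. apply (is_derive_log_norm (fun z => P z y) (fun z => Q z y)); auto.
        -- intros x y. apply (is_derive_log_norm (fun z => P x z) (fun z => Q x z)); auto.
        -- apply C.
        -- intros y. now rewrite (proj1 (P_periodic y)), (proj1 (Q_periodic y)).
Qed.

Lemma log_quotient_y_torus_integral :
  torus_integral_zero (fun x y => Cdiv (Wy x y) (P x y, Q x y)).
Proof.
  pose proof (log_quotient_continuous Wy Wy_cont) as C.
  apply torus_integral_zero_of_sections. intros x.
  apply is_RInt_C_of_components; cbn [fst snd RtoC].
  - apply (is_RInt_derive_periodic (fun v => atan (Q x v / P x v))).
    + intros y. apply (is_derive_atan_ratio (fun z => P x z) (fun z => Q x z)); auto.
    + intros y. apply (continuous_section (fun u v => fst (Cdiv (Wy u v) (P u v, Q u v)))), C.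
    + now rewrite (proj2 (P_periodic x)), (proj2 (Q_periodic x)).
  - apply (is_RInt_derive_periodic (fun v => - (ln (P x v ^ 2 + Q x v ^ 2) / 2))).
    + intros y. apply (is_derive_log_norm (fun z => P x z) (fun z => Q x z)); auto.
    + intros y. apply (continuous_section (fun u v => snd (Cdiv (Wy u v) (P u v, Q u v)))), C.
    + now rewrite (proj2 (P_periodic x)), (proj2 (Q_periodic x)).
Qed.

End LogarithmicDerivative.


Lemma is_derive_Rsum n (f : nat -> R -> R) (f' : nat -> R) x :
  (forall j, is_derive (f j) x (f' j)) ->
  is_derive (fun z => Rsum n (fun j => f j z)) x (Rsum n f').
Proof.
  intros H. induction n.
  - apply (is_derive_const (K := R_AbsRing) (V := R_NormedModule) 0).
  - apply (is_derive_ext (fun z => Rsum n (fun j => f j z) + f n z)).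
    + intros t. symmetry. apply Rsum_S.
    + rewrite Rsum_S. apply (is_derive_plus (K := R_AbsRing) (V := R_NormedModule)); auto.
Qed.

Lemma continuity_2d_pt_Rsum n (f : nat -> R -> R -> R) x y :
  (forall j, continuity_2d_pt (f j) x y) ->
  continuity_2d_pt (fun u v => Rsum n (fun j => f j u v)) x y.
Proof.
  intros H. induction n.
  - exact (continuity_2d_pt_const x y 0).
  - apply continuity_2d_pt_ext with (fun u v => Rsum n (fun j => f j u v) + f n u v).
    + intros; symmetry; apply Rsum_S.
    + apply continuity_2d_pt_plus; auto.
Qed.

Lemma is_derive_shift (f : R -> R) c x l : is_derive f x l -> is_derive (fun z => c + f z) x l.
Proof.
  intros H. pose proof (is_derive_plus (fun _ => c) f x 0 l (is_derive_const c x) H) as H'.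
  simpl in H'. unfold plus in H'; simpl in H'. now rewrite Rplus_0_l in H'.
Qed.

Section TrigPolynomial.

Variables (N : nat) (g : nat -> C) (m n : nat -> Z).

Definition phase (j : nat) (x y : R) : R := IZR (m j) * x + IZR (n j) * y.

(* The weights [c] record derivatives: [d/dx] multiplies the [j]-th term by [i m_j]
   (see [tpoly_dx]). *)
Definition tpoly (c : nat -> R) (x y : R) : C :=
  Csum N (fun j => Cmult (Cmult (RtoC (c j)) (g j)) (circ 0 (phase j x y))).

Lemma tpoly_ext c c' x y : (forall j, c j = c' j) -> tpoly c x y = tpoly c' x y.
Proof. intros H. unfold tpoly. apply Csum_ext. intros j _. now rewrite H. Qed.

Lemma tpoly_fst c x y : fst (tpoly c x y) =
  Rsum N (fun j => c j * fst (g j) * cos (phase j x y) + - (c j * snd (g j)) * sin (phase j x y)).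
Proof.
  unfold tpoly. rewrite Csum_fst. apply Rsum_ext. intros j _. unfold circ.
  simpl. rewrite exp_0. ring.
Qed.

Lemma tpoly_snd c x y : snd (tpoly c x y) =
  Rsum N (fun j => c j * snd (g j) * cos (phase j x y) + c j * fst (g j) * sin (phase j x y)).
Proof.
  unfold tpoly. rewrite Csum_snd. apply Rsum_ext. intros j _. unfold circ.
  simpl. rewrite exp_0. ring.
Qed.

Lemma continuity_2d_pt_trig j (c1 c2 : R) x y :
  continuity_2d_pt (fun u v => c1 * cos (phase j u v) + c2 * sin (phase j u v)) x y.
Proof.
  assert (Hphase : forall x y, continuity_2d_pt (phase j) x y).
  { intros. unfold phase. apply continuity_2d_pt_plus; apply continuity_2d_pt_mult;
      auto using continuity_2d_pt_const, continuity_2d_pt_id1, continuity_2d_pt_id2. }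
  apply continuity_2d_pt_plus; apply continuity_2d_pt_mult; try apply continuity_2d_pt_const;
    apply (continuity_1d_2d_pt_comp _ (phase j)); auto.
  - apply continuity_cos.
  - apply continuity_sin.
Qed.

Lemma tpoly_continuous c x y :
  continuity_2d_pt (fun u v => fst (tpoly c u v)) x y /\
  continuity_2d_pt (fun u v => snd (tpoly c u v)) x y.
Proof.
  split; eapply continuity_2d_pt_ext;
    try (intros u v; symmetry; first [apply tpoly_fst | apply tpoly_snd]);
    apply continuity_2d_pt_Rsum; intros j; apply continuity_2d_pt_trig.
Qed.

Lemma tpoly_dx c x y :
  is_derive (fun z => fst (tpoly c z y)) x (- snd (tpoly (fun j => IZR (m j) * c j) x y)) /\
  is_derive (fun z => snd (tpoly c z y)) x (fst (tpoly (fun j => IZR (m j) * c j) x y)).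
Proof.
  rewrite tpoly_fst, tpoly_snd, <- Rsum_opp. unfold phase.
  split; (eapply is_derive_ext; [intros t; symmetry; first [apply tpoly_fst | apply tpoly_snd]|]);
    apply is_derive_Rsum; intros j; unfold phase; auto_derive; auto; ring.
Qed.

Lemma tpoly_dy c x y :
  is_derive (fun z => fst (tpoly c x z)) y (- snd (tpoly (fun j => IZR (n j) * c j) x y)) /\
  is_derive (fun z => snd (tpoly c x z)) y (fst (tpoly (fun j => IZR (n j) * c j) x y)).
Proof.
  rewrite tpoly_fst, tpoly_snd, <- Rsum_opp. unfold phase.
  split; (eapply is_derive_ext; [intros t; symmetry; first [apply tpoly_fst | apply tpoly_snd]|]);
    apply is_derive_Rsum; intros j; unfold phase; auto_derive; auto; ring.
Qed.

Lemma tpoly_periodic c t : tpoly c 0 t = tpoly c (2 * PI) t /\ tpoly c t 0 = tpoly c t (2 * PI).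
Proof.
  split; apply Csum_ext; intros j _; f_equal; unfold phase.
  - replace (IZR (m j) * (2 * PI) + IZR (n j) * t)
      with (IZR (m j) * 0 + IZR (n j) * t + IZR (m j) * (2 * PI)) by ring.
    now rewrite circ_add_2PI_multiple.
  - replace (IZR (m j) * t + IZR (n j) * (2 * PI))
      with (IZR (m j) * t + IZR (n j) * 0 + IZR (n j) * (2 * PI)) by ring.
    now rewrite circ_add_2PI_multiple.
Qed.

Hypothesis g_small : Rsum N (fun j => Cmod (g j)) < 1.

Lemma Cmod_tpoly_lt_1 x y : Cmod (tpoly (fun _ => 1) x y) < 1.
Proof.
  eapply Rle_lt_trans; [apply Cmod_Csum_le|]. eapply Rle_lt_trans; [|apply g_small].
  right. apply Rsum_ext. intros j _. rewrite !Cmod_mult, Cmod_circ, exp_0, Cmod_1. ring.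
Qed.

Lemma one_plus_tpoly_re_pos x y : 0 < fst (Cplus (RtoC 1) (tpoly (fun _ => 1) x y)).
Proof.
  pose proof (Cmod_tpoly_lt_1 x y) as Hlt.
  pose proof (re_le_Cmod (tpoly (fun _ => 1) x y)) as Hre.
  apply Rabs_le_between in Hre. unfold Re in Hre. simpl. lra.
Qed.

Lemma tpoly_log_quotient_torus_integral :
  torus_integral_zero (fun x y =>
    Cdiv (tpoly (fun j => IZR (m j)) x y) (Cplus (RtoC 1) (tpoly (fun _ => 1) x y))) /\
  torus_integral_zero (fun x y =>
    Cdiv (tpoly (fun j => IZR (n j)) x y) (Cplus (RtoC 1) (tpoly (fun _ => 1) x y))).
Proof.
  set (u := tpoly (fun _ => 1)).
  set (P := fun x y => fst (Cplus (RtoC 1) (u x y))).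
  set (Q := fun x y => snd (Cplus (RtoC 1) (u x y))).
  assert (Ea : forall x y, tpoly (fun j => IZR (m j) * 1) x y = tpoly (fun j => IZR (m j)) x y)
    by (intros; apply tpoly_ext; intros; ring).
  assert (Eb : forall x y, tpoly (fun j => IZR (n j) * 1) x y = tpoly (fun j => IZR (n j)) x y)
    by (intros; apply tpoly_ext; intros; ring).
  assert (HP : forall x y, continuity_2d_pt P x y)
    by (intros; apply (continuity_2d_pt_plus (fun _ _ => 1) (fun x y => fst (u x y)));
        [apply continuity_2d_pt_const | apply tpoly_continuous]).
  assert (HQ : forall x y, continuity_2d_pt Q x y)
    by (intros; apply (continuity_2d_pt_plus (fun _ _ => 0) (fun x y => snd (u x y)));
        [apply continuity_2d_pt_const | apply tpoly_continuous]).
  assert (HPdx : forall x y, is_derive (fun z => P z y) x (- snd (tpoly (fun j => IZR (m j)) x y)))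
    by (intros; rewrite <- Ea; apply is_derive_shift, tpoly_dx).
  assert (HQdx : forall x y, is_derive (fun z => Q z y) x (fst (tpoly (fun j => IZR (m j)) x y)))
    by (intros; rewrite <- Ea; apply is_derive_shift, tpoly_dx).
  assert (HPdy : forall x y, is_derive (fun z => P x z) y (- snd (tpoly (fun j => IZR (n j)) x y)))
    by (intros; rewrite <- Eb; apply is_derive_shift, tpoly_dy).
  assert (HQdy : forall x y, is_derive (fun z => Q x z) y (fst (tpoly (fun j => IZR (n j)) x y)))
    by (intros; rewrite <- Eb; apply is_derive_shift, tpoly_dy).
  assert (Hper : forall t, P 0 t = P (2 * PI) t /\ P t 0 = P t (2 * PI)).
  { intros t. unfold P, u. now rewrite (proj1 (tpoly_periodic _ t)), (proj2 (tpoly_periodic _ t)). }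
  assert (Qper : forall t, Q 0 t = Q (2 * PI) t /\ Q t 0 = Q t (2 * PI)).
  { intros t. unfold Q, u. now rewrite (proj1 (tpoly_periodic _ t)), (proj2 (tpoly_periodic _ t)). }
  split.
  - exact (log_quotient_x_torus_integral P Q _ _ one_plus_tpoly_re_pos HP HQ (tpoly_continuous _)
             HPdx HQdx HPdy HQdy Hper Qper).
  - exact (log_quotient_y_torus_integral P Q _ one_plus_tpoly_re_pos HP HQ (tpoly_continuous _)
             HPdy HQdy Hper Qper).
Qed.

End TrigPolynomial.

(** * Points where one monomial dominates *)

Definition dominant (N : nat) (b : nat -> Z * Z) (a : nat -> C) (w : R * R) (i0 : nat) : Prop :=
  Rsum N (fun j => if Nat.eqb j i0 then 0 else Cmod (a j) * exp (rho b w j))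
    < Cmod (a i0) * exp (rho b w i0).

Lemma dominant_coef_neq_0 N b a w i0 : dominant N b a w i0 -> a i0 <> RtoC 0.
Proof.
  intros H E. unfold dominant in H. rewrite E, Cmod_0, Rmult_0_l in H.
  assert (0 <= Rsum N (fun j => if Nat.eqb j i0 then 0 else Cmod (a j) * exp (rho b w j))).
  { apply Rsum_nonneg. intros j _. destruct (Nat.eqb j i0); [lra|].
    apply Rmult_le_pos; [apply Cmod_ge_0 | left; apply exp_pos]. }
  lra.
Qed.

Lemma dominant_not_amoeba N b a w i0 : (i0 < N)%nat -> dominant N b a w i0 -> ~ amoeba N b a w.
Proof.
  intros Hi Hd (X & Y & HX & HY & H0 & H1 & H2).
  unfold Hpoly in H0. rewrite (Csum_extract _ _ i0 Hi) in H0.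
  set (S := Csum N (fun j => if Nat.eqb j i0 then RtoC 0 else Cmult (a j) (monom b j X Y))) in H0.
  assert (E : Cmult (a i0) (monom b i0 X Y) = Copp S).
  { replace (Cmult (a i0) (monom b i0 X Y)) with (Cplus (Cplus (Cmult (a i0) (monom b i0 X Y)) S) (Copp S))
      by ring.
    rewrite H0. ring. }
  assert (HS : Cmod S <= Rsum N (fun j => if Nat.eqb j i0 then 0 else Cmod (a j) * exp (rho b w j))).
  { eapply Rle_trans; [apply Cmod_Csum_le|]. right. apply Rsum_ext. intros j _.
    destruct (Nat.eqb j i0); [apply Cmod_0|].
    rewrite Cmod_mult, Cmod_monom, H1, H2, <- surjective_pairing by auto. reflexivity. }
  apply (f_equal Cmod) in E.
  rewrite Cmod_opp, Cmod_mult, Cmod_monom, H1, H2, <- surjective_pairing in E by auto.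
  unfold dominant in Hd. lra.
Qed.

Lemma order_coord_eq N b a (G : C -> C -> C) w (m : R) (rest : R -> R -> C) :
  (forall t1 t2, Cdiv (G (circ (fst w) t1) (circ (snd w) t2))
                      (Hpoly N b a (circ (fst w) t1) (circ (snd w) t2))
                 = Cplus (RtoC m) (rest t1 t2)) ->
  torus_integral_zero rest ->
  order_coord N b a G w = RtoC m.
Proof.
  intros Hrest [Hex Hout]. unfold order_coord.
  assert (Hin : forall t1, is_RInt (V := C_R_CompleteNormedModule)
     (fun t2 => let X := circ (fst w) t1 in let Y := circ (snd w) t2 in
                Cmult (Cdiv (G X Y) (Hpoly N b a X Y)) (Cmult Ci Ci)) 0 (2 * PI)
     (opp (plus (scal (2 * PI - 0) (RtoC m))
                (RInt (V := C_R_CompleteNormedModule) (fun t2 => rest t1 t2) 0 (2 * PI))))).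
  { intros t1. eapply is_RInt_ext.
    2: apply (is_RInt_opp (V := C_R_NormedModule)), (is_RInt_plus (V := C_R_NormedModule));
       [apply (is_RInt_const (V := C_R_NormedModule))
       | apply (RInt_correct (V := C_R_CompleteNormedModule)), Hex].
    intros t2 _. cbv zeta. rewrite Hrest. apply injective_projections; simpl; unfold opp, plus; simpl; ring. }
  rewrite (RInt_ext _ _ _ _ (fun t1 _ => is_RInt_unique _ _ _ _ (Hin t1))).
  assert (Hmean : is_RInt (V := C_R_CompleteNormedModule)
     (fun t1 => opp (plus (scal (2 * PI - 0) (RtoC m))
                          (RInt (V := C_R_CompleteNormedModule) (fun t2 => rest t1 t2) 0 (2 * PI))))
     0 (2 * PI) (opp (plus (scal (2 * PI - 0) (scal (2 * PI - 0) (RtoC m))) (RtoC 0)))).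
  { apply (is_RInt_opp (V := C_R_NormedModule)), (is_RInt_plus (V := C_R_NormedModule));
      [apply (is_RInt_const (V := C_R_NormedModule)) | apply Hout]. }
  rewrite (is_RInt_unique _ _ _ _ Hmean). pose proof PI_RGT_0.
  apply injective_projections; simpl; unfold opp, plus, scal; simpl; unfold mult; simpl; field; lra.
Qed.

Definition weighted_Hpoly (N : nat) (b : nat -> Z * Z) (a : nat -> C) (pr : Z * Z -> Z)
    (X Y : C) : C :=
  Csum N (fun i => Cmult (Cmult (a i) (RtoC (IZR (pr (b i))))) (monom b i X Y)).

Definition exponent_shift (b : nat -> Z * Z) (i0 : nat) (pr : Z * Z -> Z) (j : nat) : Z :=
  (pr (b j) - pr (b i0))%Z.

(* Coefficients of [H / (a_{i0} X^{m_{i0}} Y^{n_{i0}}) - 1] on [Log^{-1}(w)], written as a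
   trigonometric polynomial in the angles. *)
Definition relative_coef (b : nat -> Z * Z) (a : nat -> C) (w : R * R) (i0 j : nat) : C :=
  if Nat.eqb j i0 then RtoC 0
  else Cdiv (Cmult (a j) (RtoC (exp (rho b w j)))) (Cmult (a i0) (RtoC (exp (rho b w i0)))).

Lemma relative_coef_small N b a w i0 :
  dominant N b a w i0 -> Rsum N (fun j => Cmod (relative_coef b a w i0 j)) < 1.
Proof.
  intros H. pose proof (dominant_coef_neq_0 _ _ _ _ _ H) as Ha.
  set (M := Cmod (a i0) * exp (rho b w i0)).
  assert (HM : 0 < M) by (apply Rmult_lt_0_compat; [apply Cmod_gt_0; auto | apply exp_pos]).
  rewrite (Rsum_ext _ _ (fun j => / M *
       (if Nat.eqb j i0 then 0 else Cmod (a j) * exp (rho b w j)))).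
  - rewrite Rsum_scal. apply Rmult_lt_reg_l with M; auto.
    rewrite <- Rmult_assoc, Rinv_r, Rmult_1_l, Rmult_1_r by lra. exact H.
  - intros j _. unfold relative_coef. destruct (Nat.eqb j i0); [rewrite Cmod_0; ring|].
    assert (Hexp : forall r, RtoC (exp r) <> RtoC 0) by (intros; apply RtoC_neq_0, Rgt_not_eq, exp_pos).
    rewrite Cmod_div, !Cmod_mult, !Cmod_R, !Rabs_pos_eq by (try (left; apply exp_pos);
      apply Cmult_neq_0; auto).
    unfold M. field. split; [apply Rgt_not_eq, exp_pos | apply Rgt_not_eq, Cmod_gt_0; auto].
Qed.

Section DominantDecomposition.

Variables (N : nat) (b : nat -> Z * Z) (a : nat -> C) (w : R * R) (i0 : nat).
Hypothesis i0_lt : (i0 < N)%nat.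
Hypothesis a_dominant : dominant N b a w i0.
Variables t1 t2 : R.

Let X := circ (fst w) t1.
Let Y := circ (snd w) t2.
Let g := relative_coef b a w i0.
Let u := tpoly N g (exponent_shift b i0 fst) (exponent_shift b i0 snd).
Let c0 := Cmult (a i0) (monom b i0 X Y).
Let ephase j := circ 0 (phase (exponent_shift b i0 fst) (exponent_shift b i0 snd) j t1 t2).

Lemma monom_term_factor j :
  Cmult (a j) (monom b j X Y) =
  Cmult c0 (Cplus (if Nat.eqb j i0 then RtoC 1 else RtoC 0) (Cmult (g j) (ephase j))).
Proof.
  pose proof (dominant_coef_neq_0 _ _ _ _ _ a_dominant) as Ha.
  unfold c0, X, Y, g, ephase, relative_coef. rewrite !monom_circ, <- surjective_pairing.
  destruct (Nat.eqb_spec j i0) as [->|Hne]; [ring|].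
  replace (rho b (t1, t2) j)
    with (rho b (t1, t2) i0 + phase (exponent_shift b i0 fst) (exponent_shift b i0 snd) j t1 t2)
    by (unfold rho, phase, exponent_shift; simpl; rewrite !minus_IZR; ring).
  rewrite (circ_scale (rho b w j)), (circ_scale (rho b w i0)), circ_0_plus.
  field. repeat split; auto using circ_neq_0; apply RtoC_neq_0, Rgt_not_eq, exp_pos.
Qed.

Lemma Hpoly_factor : Hpoly N b a X Y = Cmult c0 (Cplus (RtoC 1) (u (fun _ => 1) t1 t2)).
Proof.
  unfold Hpoly. rewrite (Csum_ext _ _ _ (fun j _ => monom_term_factor j)).
  rewrite Csum_scal, Csum_plus, Csum_indicator by auto. unfold u, tpoly, ephase.
  do 2 f_equal. apply Csum_ext. intros j _. ring.
Qed.

Lemma weighted_Hpoly_factor pr :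
  weighted_Hpoly N b a pr X Y =
  Cmult c0 (Cplus (Cmult (RtoC (IZR (pr (b i0)))) (Cplus (RtoC 1) (u (fun _ => 1) t1 t2)))
                  (u (fun j => IZR (exponent_shift b i0 pr j)) t1 t2)).
Proof.
  unfold weighted_Hpoly.
  rewrite (Csum_ext _ _ (fun j => Cmult c0
     (Cplus (Cplus (if Nat.eqb j i0 then RtoC (IZR (pr (b i0))) else RtoC 0)
                   (Cmult (RtoC (IZR (pr (b i0)))) (Cmult (Cmult (RtoC 1) (g j)) (ephase j))))
            (Cmult (Cmult (RtoC (IZR (exponent_shift b i0 pr j))) (g j)) (ephase j))))).
  - rewrite Csum_scal, !Csum_plus, Csum_indicator, Csum_scal by auto. unfold u, tpoly, ephase. ring.
  - intros j _. rewrite <- Cmult_assoc, (Cmult_comm (RtoC _)), Cmult_assoc, monom_term_factor.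
    unfold g, relative_coef, exponent_shift.
    destruct (Nat.eqb_spec j i0) as [->|]; [ring|].
    rewrite minus_IZR. unfold RtoC. apply injective_projections; simpl; ring.
Qed.

Lemma weighted_Hpoly_quotient pr :
  Cdiv (weighted_Hpoly N b a pr X Y) (Hpoly N b a X Y) =
  Cplus (RtoC (IZR (pr (b i0))))
        (Cdiv (u (fun j => IZR (exponent_shift b i0 pr j)) t1 t2)
              (Cplus (RtoC 1) (u (fun _ => 1) t1 t2))).
Proof.
  pose proof (dominant_coef_neq_0 _ _ _ _ _ a_dominant) as Ha.
  assert (Hc0 : c0 <> RtoC 0).
  { unfold c0, X, Y. rewrite monom_circ. apply Cmult_neq_0; auto using circ_neq_0. }
  assert (Hu : Cplus (RtoC 1) (u (fun _ => 1) t1 t2) <> RtoC 0).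
  { intro E. apply (f_equal fst) in E.
    pose proof (one_plus_tpoly_re_pos N g (exponent_shift b i0 fst) (exponent_shift b i0 snd)
                  (relative_coef_small _ _ _ _ _ a_dominant) t1 t2).
    unfold u in E. simpl in *. lra. }
  rewrite weighted_Hpoly_factor, Hpoly_factor. field. auto.
Qed.

End DominantDecomposition.

Lemma dominant_amoeba_order N b a w i0 : (i0 < N)%nat -> dominant N b a w i0 ->
  amoeba_order N b a w = (RtoC (IZR (fst (b i0))), RtoC (IZR (snd (b i0)))).
Proof.
  intros Hi Hd.
  destruct (tpoly_log_quotient_torus_integral N (relative_coef b a w i0)
              (exponent_shift b i0 fst) (exponent_shift b i0 snd) (relative_coef_small _ _ _ _ _ Hd))
    as [Hx Hy].
  unfold amoeba_order. f_equal.
  - eapply order_coord_eq; [|exact Hx].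
    intros t1 t2. exact (weighted_Hpoly_quotient N b a w i0 Hi Hd t1 t2 fst).
  - eapply order_coord_eq; [|exact Hy].
    intros t1 t2. exact (weighted_Hpoly_quotient N b a w i0 Hi Hd t1 t2 snd).
Qed.

(** * Changing the triangle in the expansions of [H_k] *)

Lemma Q2R_inject_Z z : Q2R (inject_Z z) = IZR z.
Proof. unfold Q2R; simpl. field. Qed.

(* The vector [e_j0 - m e_0 - n e_1 - (1 - m - n) e_2] lies in [L] when [(m, n) = b_j0],
   because [b_0 = (1,0)], [b_1 = (0,1)], [b_2 = (0,0)]. *)
Definition kernel_vector (m n : Z) (j0 x : nat) : Q :=
  inject_Z (Z.b2z (Nat.eqb x j0) - m * Z.b2z (Nat.eqb x 0) - n * Z.b2z (Nat.eqb x 1)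
            - (1 - m - n) * Z.b2z (Nat.eqb x 2)).

Lemma Rsum_kernel_vector N (f : nat -> R) m n j0 : (j0 < N)%nat -> (3 <= N)%nat ->
  Rsum N (fun x => f x * Q2R (kernel_vector m n j0 x)) =
  f j0 - IZR m * f 0%nat - IZR n * f 1%nat - IZR (1 - m - n) * f 2%nat.
Proof.
  intros H1 H2.
  rewrite (Rsum_ext _ _ (fun x => (if Nat.eqb x j0 then f x else 0)
      + - IZR m * (if Nat.eqb x 0 then f x else 0) + - IZR n * (if Nat.eqb x 1 then f x else 0)
      + - IZR (1 - m - n) * (if Nat.eqb x 2 then f x else 0))).
  - rewrite !Rsum_plus, !Rsum_scal, !Rsum_indicator by lia. ring.
  - intros x _. unfold kernel_vector. rewrite Q2R_inject_Z, !minus_IZR, !mult_IZR, !minus_IZR.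
    destruct (Nat.eqb x j0), (Nat.eqb x 0), (Nat.eqb x 1), (Nat.eqb x 2); cbn [Z.b2z]; ring.
Qed.

Lemma inLQ_kernel_vector N b j0 :
  b 0%nat = (1%Z, 0%Z) -> b 1%nat = (0%Z, 1%Z) -> b 2%nat = (0%Z, 0%Z) ->
  (j0 < N)%nat -> (3 <= N)%nat ->
  inLQ N b (kernel_vector (fst (b j0)) (snd (b j0)) j0).
Proof.
  intros B0 B1 B2 H1 H2.
  repeat split; apply eqR_Qeq; rewrite Q2R_Qsum; change (Q2R 0) with (Q2R (inject_Z 0));
    rewrite Q2R_inject_Z.
  - rewrite (Rsum_ext _ _ (fun x => IZR (fst (b x)) * Q2R (kernel_vector (fst (b j0)) (snd (b j0)) j0 x)))
      by (intros; rewrite Q2R_mult, Q2R_inject_Z; ring).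
    rewrite Rsum_kernel_vector, B0, B1, B2 by auto. simpl. ring.
  - rewrite (Rsum_ext _ _ (fun x => IZR (snd (b x)) * Q2R (kernel_vector (fst (b j0)) (snd (b j0)) j0 x)))
      by (intros; rewrite Q2R_mult, Q2R_inject_Z; ring).
    rewrite Rsum_kernel_vector, B0, B1, B2 by auto. simpl. ring.
  - rewrite (Rsum_ext _ _ (fun x => 1 * Q2R (kernel_vector (fst (b j0)) (snd (b j0)) j0 x)))
      by (intros; ring).
    rewrite Rsum_kernel_vector, !minus_IZR by auto. simpl. ring.
Qed.

Definition expansion_coef (s : tri -> nat -> nat -> nat) (sg : tri) (k j : nat) : R :=
  if in_trib sg j then 0 else INR (s sg k j).

Lemma Q2R_expansion_term (s : tri -> nat -> nat -> nat) sg k j (l : nat -> Q) :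
  Q2R (if in_trib sg j then 0%Q else (inject_Z (Z.of_nat (s sg k j)) * l j)%Q) =
  expansion_coef s sg k j * Q2R (l j).
Proof.
  unfold expansion_coef. destruct (in_trib sg j).
  - change (Q2R 0) with (Q2R (inject_Z 0)). rewrite Q2R_inject_Z. ring.
  - rewrite Q2R_mult, Q2R_inject_Z, <- INR_IZR_INZ. ring.
Qed.

Lemma expansion_coef_difference_affine N p b h s sg sg' k j :
  b 0%nat = (1%Z, 0%Z) -> b 1%nat = (0%Z, 1%Z) -> b 2%nat = (0%Z, 0%Z) -> (3 <= N)%nat ->
  H_expansion N p b h s sg -> H_expansion N p b h s sg' -> (k < p)%nat -> (j < N)%nat ->
  let d x := expansion_coef s sg k x - expansion_coef s sg' k x in
  d j = IZR (fst (b j)) * d 0%nat + IZR (snd (b j)) * d 1%nat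
        + (1 - IZR (fst (b j)) - IZR (snd (b j))) * d 2%nat.
Proof.
  intros B0 B1 B2 HN E E' Hk Hj d.
  pose proof (inLQ_kernel_vector N b j B0 B1 B2 Hj HN) as L.
  pose proof (Qeq_eqR _ _ (E k Hk _ L)) as X. pose proof (Qeq_eqR _ _ (E' k Hk _ L)) as X'.
  rewrite X in X'. clear X. rewrite !Q2R_Qsum in X'.
  rewrite !(Rsum_ext _ (fun x => Q2R (if in_trib _ x then 0%Q else _))
              (fun x => expansion_coef s _ k x * Q2R (kernel_vector (fst (b j)) (snd (b j)) j x)))
    in X' by (intros; apply Q2R_expansion_term).
  rewrite !Rsum_kernel_vector, !minus_IZR in X' by auto. unfold d. lra.
Qed.


Definition skip (r k : nat) : nat := if Nat.ltb k r then k else S k.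
Definition unskip (r k : nat) : nat := if Nat.ltb k r then k else pred k.

Lemma skip_neq r k : skip r k <> r.
Proof. unfold skip. destruct (Nat.ltb_spec k r); lia. Qed.

Lemma unskip_skip r k : unskip r (skip r k) = k.
Proof.
  unfold skip, unskip. destruct (Nat.ltb_spec k r).
  - now rewrite (proj2 (Nat.ltb_lt _ _)).
  - destruct (Nat.ltb_spec (S k) r); [lia|reflexivity].
Qed.

Lemma Rsum_skip F r p' : (r <= p')%nat -> Rsum (S p') F = F r + Rsum p' (fun k => F (skip r k)).
Proof.
  induction p'; intros H.
  - replace r with 0%nat by lia. unfold Rsum; simpl. ring.
  - destruct (Nat.eq_dec r (S p')) as [->|Hne].
    + rewrite Rsum_S, (Rsum_ext (S p') (fun k => F (skip (S p') k)) F); [ring|].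
      intros k Hk. unfold skip. destruct (Nat.ltb_spec k (S p')); [auto|lia].
    + rewrite Rsum_S, IHp', (Rsum_S p') by lia.
      replace (skip r p') with (S p') by (unfold skip; destruct (Nat.ltb_spec p' r); lia).
      ring.
Qed.

Lemma Q2R_nonzero (x : Q) : ~ x == 0 -> Q2R x <> 0.
Proof. intros H E. apply H, eqR_Qeq. rewrite E. unfold Q2R; simpl; ring. Qed.

(* One step of Gaussian elimination, with pivot [M r j]. *)
Lemma left_kernel_pivot p' (M : nat -> nat -> Q) j r (cols : list nat) (c' : nat -> Q) :
  (r <= p')%nat -> ~ M r j == 0 ->
  (forall j', In j' cols ->
     Qsum p' (fun k' => c' k' * (M (skip r k') j' - M (skip r k') j / M r j * M r j'))%Q == 0) ->
  forall j', In j' (j :: cols) ->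
    Qsum (S p') (fun k => (if Nat.eqb k r
                           then - Qsum p' (fun k' => c' k' * M (skip r k') j) / M r j
                           else c' (unskip r k)) * M k j')%Q == 0.
Proof.
  intros Hr Hpiv Hc' j' Hj'. apply eqR_Qeq.
  set (S := Qsum p' (fun k' => c' k' * M (skip r k') j)%Q).
  assert (HS : Q2R S = Rsum p' (fun k' => Q2R (c' k') * Q2R (M (skip r k') j))).
  { unfold S. rewrite Q2R_Qsum. apply Rsum_ext. intros; apply Q2R_mult. }
  pose proof (Q2R_nonzero _ Hpiv) as Hpiv'.
  rewrite Q2R_Qsum, (Rsum_skip _ r p' Hr), Nat.eqb_refl, Q2R_mult, Q2R_div, Q2R_opp by auto.
  rewrite (Rsum_ext _ _ (fun k' => Q2R (c' k') * Q2R (M (skip r k') j'))).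
  2: { intros k' _. destruct (Nat.eqb_spec (skip r k') r) as [E|_];
       [now apply skip_neq in E | now rewrite unskip_skip, Q2R_mult]. }
  change (Q2R 0) with (Q2R (inject_Z 0)). rewrite Q2R_inject_Z.
  destruct Hj' as [<-|Hj'].
  - rewrite HS. field. auto.
  - pose proof (Qeq_eqR _ _ (Hc' j' Hj')) as Z. rewrite Q2R_Qsum in Z.
    change (Q2R 0) with (Q2R (inject_Z 0)) in Z. rewrite Q2R_inject_Z in Z.
    rewrite (Rsum_ext _ _ (fun k' => Q2R (c' k' * (M (skip r k') j' - M (skip r k') j / M r j * M r j'))
               + Q2R (M r j') / Q2R (M r j) * (Q2R (c' k') * Q2R (M (skip r k') j)))).
    + rewrite Rsum_plus, Rsum_scal, <- HS, Z. field. auto.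
    + intros k' _. rewrite Q2R_mult, Q2R_minus, Q2R_mult, Q2R_div by auto. field. auto.
Qed.

Lemma exists_left_kernel_vector (cols : list nat) : forall p (M : nat -> nat -> Q),
  (length cols < p)%nat ->
  exists c : nat -> Q, (exists k, (k < p)%nat /\ ~ c k == 0) /\
    forall j, In j cols -> Qsum p (fun k => c k * M k j)%Q == 0.
Proof.
  induction cols as [|j cols IH]; intros p M Hl; simpl in Hl.
  - exists (fun _ => 1%Q). split; [exists 0%nat; split; [lia|discriminate]|]. intros j [].
  - destruct (classic (exists r, (r < p)%nat /\ ~ M r j == 0)) as [[r [Hr Hpiv]]|Hzero].
    + destruct p as [|p']; [lia|].
      destruct (IH p' (fun k' j' => M (skip r k') j' - M (skip r k') j / M r j * M r j')%Q)
        as [c' [[k0 [Hk0 Hc0]] Hc']]; [lia|].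
      exists (fun k => if Nat.eqb k r then (- Qsum p' (fun k' => c' k' * M (skip r k') j) / M r j)%Q
                       else c' (unskip r k)).
      split.
      * exists (skip r k0). split; [unfold skip; destruct (Nat.ltb_spec k0 r); lia|].
        destruct (Nat.eqb_spec (skip r k0) r) as [E|_]; [now apply skip_neq in E|].
        now rewrite unskip_skip.
      * apply left_kernel_pivot; auto. lia.
    + destruct (IH p M) as [c [Hc1 Hc2]]; [lia|].
      exists c. split; auto. intros j' [<-|Hj']; auto.
      apply eqR_Qeq. rewrite Q2R_Qsum. change (Q2R 0) with (Q2R (inject_Z 0)). rewrite Q2R_inject_Z.
      rewrite (Rsum_ext _ _ (fun _ => 0)); [rewrite Rsum_const; ring|].
      intros k Hk. rewrite Q2R_mult.
      assert (Hz : M k j == 0) by (apply NNPP; intro; apply Hzero; eauto).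
      rewrite (Qeq_eqR _ _ Hz). unfold Q2R; simpl; ring.
Qed.

Lemma in_trib_iff sg j : in_trib sg j = true <-> In j (tri_idx sg).
Proof.
  unfold in_trib. rewrite existsb_exists. split.
  - intros [x [Hx E]]. apply Nat.eqb_eq in E. now subst.
  - intros H. exists j. split; auto. apply Nat.eqb_refl.
Qed.

Lemma nondegenerate_column_nonzero p s sg j :
  nondegenerate (p + 3) p s sg ->
  (forall i, In i (tri_idx sg) -> (i < p + 3)%nat) -> NoDup (tri_idx sg) ->
  (j < p + 3)%nat -> in_trib sg j = false -> exists k, (k < p)%nat /\ (1 <= s sg k j)%nat.
Proof.
  intros Hnd Hlt Hnodup Hj Hout. apply NNPP. intros Hzero.
  assert (Z0 : forall k, (k < p)%nat -> s sg k j = 0%nat).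
  { intros k Hk. destruct (s sg k j) eqn:E; auto. exfalso; apply Hzero; exists k; split; [auto|lia]. }
  set (keep := fun j' => negb (in_trib sg j') && negb (Nat.eqb j' j)).
  set (cols := filter keep (seq 0 (p + 3))).
  assert (Hlen : (length cols < p)%nat).
  { pose proof (filter_length keep (seq 0 (p + 3))) as FL. rewrite length_seq in FL.
    assert (4 <= length (filter (fun x => negb (keep x)) (seq 0 (p + 3))))%nat.
    { replace 4%nat with (length (j :: tri_idx sg)) by (destruct sg as [[? ?] ?]; reflexivity).
      apply NoDup_incl_length.
      - constructor; auto. rewrite <- in_trib_iff. congruence.
      - intros x Hx. apply filter_In. split.
        + apply in_seq. destruct Hx as [<-|Hx]; [lia|]. specialize (Hlt x Hx). lia.
        + unfold keep. destruct Hx as [<-|Hx].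
          * now rewrite Nat.eqb_refl, andb_false_r.
          * apply in_trib_iff in Hx. now rewrite Hx. }
    fold cols in FL. lia. }
  destruct (exists_left_kernel_vector cols p (fun k j' => inject_Z (Z.of_nat (s sg k j'))) Hlen)
    as [c [[k0 [Hk0 Hc0]] Horth]].
  apply Hc0, (Hnd c); auto.
  intros j' Hj' Hn'. destruct (Nat.eq_dec j' j) as [->|Hne].
  - apply eqR_Qeq. rewrite Q2R_Qsum. change (Q2R 0) with (Q2R (inject_Z 0)). rewrite Q2R_inject_Z.
    rewrite (Rsum_ext _ _ (fun _ => 0)); [rewrite Rsum_const; ring|].
    intros k Hk. rewrite Z0, Q2R_mult, Q2R_inject_Z by auto. simpl. ring.
  - apply Horth. unfold cols. apply filter_In. split; [apply in_seq; lia|].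
    unfold keep. rewrite Hn'. simpl. destruct (Nat.eqb_spec j' j); [lia|reflexivity].
Qed.

(** * Lattice geometry of a unimodular triangle *)

Definition det3 (b : nat -> Z * Z) (i p r : nat) : Z :=
  ((fst (b p) - fst (b i)) * (snd (b r) - snd (b i))
   - (snd (b p) - snd (b i)) * (fst (b r) - fst (b i)))%Z.

Lemma unimodular_NoDup b sg : twice_area b sg = 1%Z -> NoDup (tri_idx sg).
Proof.
  destruct sg as [[x y] z]. unfold twice_area. intros H.
  assert (x <> y /\ y <> z /\ x <> z) as (Hxy & Hyz & Hxz).
  { assert (Hz : forall e, e = 0%Z -> Z.abs e <> 1%Z) by (intros e ->; discriminate).
    repeat split; intro E; subst; (eapply Hz; [|exact H]); ring. }
  simpl. repeat constructor; simpl; intuition.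
Qed.

Lemma unimodular_vertex_choice b sg i : twice_area b sg = 1%Z -> In i (tri_idx sg) ->
  exists p r, In p (tri_idx sg) /\ In r (tri_idx sg) /\ Z.abs (det3 b i p r) = 1%Z /\
    forall j, In j (tri_idx sg) -> j = i \/ j = p \/ j = r.
Proof.
  destruct sg as [[x y] z]. unfold twice_area. intros H Hi. simpl in Hi |- *.
  destruct Hi as [<-|[<-|[<-|[]]]].
  - exists y, z. split; [tauto|]. split; [tauto|]. split; [exact H|]. intros j Hj; destruct Hj as [<-|[<-|[<-|[]]]]; tauto.
  - exists x, z. split; [tauto|]. split; [tauto|]. split; [|intros j Hj; destruct Hj as [<-|[<-|[<-|[]]]]; tauto].
    rewrite <- H, <- Z.abs_opp. unfold det3. f_equal. ring.
  - exists x, y. split; [tauto|]. split; [tauto|]. split; [|intros j Hj; destruct Hj as [<-|[<-|[<-|[]]]]; tauto].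
    rewrite <- H. unfold det3. f_equal. ring.
Qed.

Definition lattice_size (N : nat) (b : nat -> Z * Z) : R :=
  Rsum N (fun j => Rabs (IZR (fst (b j))) + Rabs (IZR (snd (b j)))).

Lemma lattice_size_bound N b j : (j < N)%nat ->
  - lattice_size N b <= IZR (fst (b j)) <= lattice_size N b /\
  - lattice_size N b <= IZR (snd (b j)) <= lattice_size N b.
Proof.
  intros Hj. pose proof (Rabs_pos (IZR (fst (b j)))). pose proof (Rabs_pos (IZR (snd (b j)))).
  assert (Rabs (IZR (fst (b j))) + Rabs (IZR (snd (b j))) <= lattice_size N b).
  { apply (Rsum_term_le N (fun j => Rabs (IZR (fst (b j))) + Rabs (IZR (snd (b j))))); auto.
    intros k _. pose proof (Rabs_pos (IZR (fst (b k)))). pose proof (Rabs_pos (IZR (snd (b k)))). lra. }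
  split; apply Rabs_le_between; lra.
Qed.

Definition dual_bound (N : nat) (b : nat -> Z * Z) : R :=
  16 * (lattice_size N b * lattice_size N b).

(* [v] solves [v . (b_p - b_i) = v . (b_r - b_i) = -2] by Cramer's rule; the determinant is
   [+-1], so [v] is integral and bounded in terms of the size of the lattice points. *)
Lemma unimodular_dual_vector N b i p r : (i < N)%nat -> (p < N)%nat -> (r < N)%nat ->
  Z.abs (det3 b i p r) = 1%Z ->
  exists v, rho b v p - rho b v i = -2 /\ rho b v r - rho b v i = -2 /\
    forall j, (j < N)%nat -> rho b v j - rho b v i <= dual_bound N b.
Proof.
  intros Hi Hp Hr Hdet.
  assert (Hd : det3 b i p r = 1%Z \/ det3 b i p r = (-1)%Z) by lia.
  set (d := IZR (det3 b i p r)).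
  assert (Hd' : d = 1 \/ d = -1) by (unfold d; destruct Hd as [E|E]; rewrite E; auto).
  set (mi := IZR (fst (b i))). set (ni := IZR (snd (b i))).
  set (mp := IZR (fst (b p))). set (np := IZR (snd (b p))).
  set (mr := IZR (fst (b r))). set (nr := IZR (snd (b r))).
  assert (Edet : d = (mp - mi) * (nr - ni) - (np - ni) * (mr - mi))
    by (unfold d, det3; rewrite minus_IZR, !mult_IZR, !minus_IZR; reflexivity).
  exists (-2 * d * (nr - np), -2 * d * (mp - mr)). unfold rho; simpl. fold mi ni mp np mr nr.
  split; [|split].
  - transitivity (-2 * d * d); [symmetry; rewrite Edet at 2; ring | destruct Hd' as [-> | ->]; ring].
  - transitivity (-2 * d * d); [symmetry; rewrite Edet at 2; ring | destruct Hd' as [-> | ->]; ring].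
  - intros j Hj. unfold dual_bound. set (M := lattice_size N b).
    destruct (lattice_size_bound N b i Hi) as [A1 A2].
    destruct (lattice_size_bound N b p Hp) as [B1 B2].
    destruct (lattice_size_bound N b r Hr) as [C1 C2].
    destruct (lattice_size_bound N b j Hj) as [D1 D2].
    fold M mi ni mp np mr nr in A1, A2, B1, B2, C1, C2, D1, D2.
    set (x1 := nr - np). set (x2 := mp - mr).
    set (y1 := IZR (fst (b j)) - mi). set (y2 := IZR (snd (b j)) - ni).
    assert (X1 : - (2 * M) <= x1 <= 2 * M) by (unfold x1; lra).
    assert (X2 : - (2 * M) <= x2 <= 2 * M) by (unfold x2; lra).
    assert (Y1 : - (2 * M) <= y1 <= 2 * M) by (unfold y1; lra).
    assert (Y2 : - (2 * M) <= y2 <= 2 * M) by (unfold y2; lra).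
    assert (P1 : x1 * y1 <= 4 * (M * M) /\ - (x1 * y1) <= 4 * (M * M)) by (split; nra).
    assert (P2 : x2 * y2 <= 4 * (M * M) /\ - (x2 * y2) <= 4 * (M * M)) by (split; nra).
    replace (IZR (fst (b j)) * (-2 * d * x1) + IZR (snd (b j)) * (-2 * d * x2)
             - (mi * (-2 * d * x1) + ni * (-2 * d * x2)))
      with (-2 * d * (x1 * y1 + x2 * y2)) by (unfold y1, y2; ring).
    destruct Hd' as [-> | ->]; lra.
Qed.


Lemma exp_le_mono x y : x <= y -> exp x <= exp y.
Proof. intros [L | ->]; [left; apply exp_increasing, L | lra]. Qed.

Lemma exp_neg_2_lt : exp (-2) < / 4.
Proof.
  assert (H1 : 2 < exp 1) by (pose proof (exp_ineq1 1); lra).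
  assert (E : exp 2 = exp 1 * exp 1) by (rewrite <- exp_plus; f_equal; ring).
  replace (-2) with (- (2)) by ring. rewrite exp_Ropp.
  apply Rinv_lt_contravar; pose proof (exp_pos 2); nra.
Qed.

Lemma Rsum_exp_except_lt_1 N i p r (e : nat -> R) : (p < N)%nat -> (r < N)%nat ->
  e p <= -2 -> e r <= -2 ->
  (forall j, (j < N)%nat -> j <> i -> j <> p -> j <> r -> exp (e j) <= / (4 * INR N)) ->
  Rsum N (fun j => if Nat.eqb j i then 0 else exp (e j)) < 1.
Proof.
  intros Hp Hr Ep Er Hrest.
  assert (HN : 0 < INR N) by (apply lt_0_INR; lia).
  assert (H4N : 0 < / (4 * INR N)) by (apply Rinv_0_lt_compat; lra).
  pose proof exp_neg_2_lt. pose proof (exp_pos (-2)).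
  apply Rle_lt_trans with
    (Rsum N (fun j => (if Nat.eqb j p then exp (-2) else 0) + (if Nat.eqb j r then exp (-2) else 0)
                      + / (4 * INR N))).
  - apply Rsum_le. intros j Hj.
    pose proof (exp_le_mono _ _ Ep). pose proof (exp_le_mono _ _ Er).
    destruct (Nat.eqb_spec j i) as [_|Hji]; [destruct (Nat.eqb j p), (Nat.eqb j r); lra|].
    destruct (Nat.eqb_spec j p) as [->|Hjp]; [destruct (Nat.eqb p r); lra|].
    destruct (Nat.eqb_spec j r) as [->|Hjr]; [lra|].
    pose proof (Hrest j Hj Hji Hjp Hjr). lra.
  - rewrite !Rsum_plus, (Rsum_indicator N p (fun _ => exp (-2))),
      (Rsum_indicator N r (fun _ => exp (-2))), Rsum_const by auto.
    replace (INR N * / (4 * INR N)) with (/ 4) by (field; lra). lra.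
Qed.

Lemma dominant_of_weights N b i p r (nu mu : nat -> R) (A0 A1 A2 K : R) (v : R * R) :
  (i < N)%nat -> (p < N)%nat -> (r < N)%nat ->
  (forall j, (j < N)%nat -> nu j = mu j + IZR (fst (b j)) * A0 + IZR (snd (b j)) * A1
                                  + (1 - IZR (fst (b j)) - IZR (snd (b j))) * A2) ->
  mu i = 0 -> mu p = 0 -> mu r = 0 ->
  (forall j, (j < N)%nat -> j <> i -> j <> p -> j <> r -> exp (- mu j) <= exp (- K) / (4 * INR N)) ->
  rho b v p - rho b v i = -2 -> rho b v r - rho b v i = -2 ->
  (forall j, (j < N)%nat -> rho b v j - rho b v i <= K) ->
  exists w, Rsum N (fun j => if Nat.eqb j i then 0 else exp (- nu j) * exp (rho b w j))
            < exp (- nu i) * exp (rho b w i).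
Proof.
  intros Hi Hp Hr Haff Mi Mp Mr Hoff Vp Vr VK.
  set (w := (fst v + A0 - A2, snd v + A1 - A2)). exists w.
  set (C := exp (- nu i) * exp (rho b w i)).
  assert (HC : 0 < C) by (apply Rmult_lt_0_compat; apply exp_pos).
  set (e j := - mu j + (rho b v j - rho b v i)).
  rewrite (Rsum_ext _ _ (fun j => C * (if Nat.eqb j i then 0 else exp (e j)))).
  - rewrite Rsum_scal. rewrite <- (Rmult_1_r C) at 2. apply Rmult_lt_compat_l; auto.
    apply (Rsum_exp_except_lt_1 N i p r); auto.
    + unfold e. rewrite Mp, Vp. lra.
    + unfold e. rewrite Mr, Vr. lra.
    + intros j Hj Hji Hjp Hjr. unfold e. rewrite exp_plus.
      pose proof (exp_le_mono _ _ (VK j Hj)).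
      assert (exp (- mu j) * exp (rho b v j - rho b v i) <= exp (- K) / (4 * INR N) * exp K)
        by (apply Rmult_le_compat; auto; left; apply exp_pos).
      replace (exp (- K) / (4 * INR N) * exp K) with (/ (4 * INR N)) in *; [lra|].
      rewrite exp_Ropp. field. split; [pose proof (exp_pos K); lra|].
      assert (0 < INR N) by (apply lt_0_INR; lia). lra.
  - intros j Hj. destruct (Nat.eqb j i); [ring|].
    unfold C, e. rewrite <- !exp_plus. f_equal.
    rewrite (Haff j Hj), (Haff i Hi), Mi. unfold w, rho. simpl. ring.
Qed.

(** * Tropical weights of the coefficients *)

Lemma Cmod_Cprod_pow n (q : nat -> C) (e : nat -> nat) :
  (forall k, (k < n)%nat -> q k <> RtoC 0) ->
  Cmod (Cprod n (fun k => Cpow (q k) (e k))) = exp (Rsum n (fun k => INR (e k) * ln (Cmod (q k)))).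
Proof.
  induction n; intros H.
  - unfold Cprod, Rsum; simpl. rewrite exp_0. apply Cmod_1.
  - rewrite Cprod_S, Cmod_mult, IHn, Rsum_S, Cmod_pow by (intros; apply H; lia).
    assert (Hp : 0 < Cmod (q n)) by (apply Cmod_gt_0, H; lia).
    rewrite exp_plus, <- ln_pow, exp_ln by (auto; apply pow_lt; auto). reflexivity.
Qed.

Definition trop_weight (p : nat) (s : tri -> nat -> nat -> nat) (t : nat -> R) (sg : tri)
    (j : nat) : R :=
  Rsum p (fun k => t k * expansion_coef s sg k j).

Lemma in_trib_sigma1 j : in_trib sigma1 j = (j <? 3)%nat.
Proof. destruct j as [|[|[|j]]]; reflexivity. Qed.

Lemma Cmod_coef_a p s q j : (forall k, (k < p)%nat -> q k <> RtoC 0) ->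
  Cmod (coef_a p s q j) = exp (- trop_weight p s (fun k => - ln (Cmod (q k))) sigma1 j).
Proof.
  intros H. unfold coef_a, trop_weight, expansion_coef. rewrite in_trib_sigma1.
  destruct (j <? 3)%nat.
  - rewrite (Rsum_ext _ _ (fun _ => 0)), Rsum_const, Rmult_0_r, Ropp_0, exp_0 by (intros; ring).
    apply Cmod_1.
  - rewrite Cmod_Cprod_pow, <- Rsum_opp by auto. f_equal. apply Rsum_ext. intros; ring.
Qed.

Lemma trop_weight_on_triangle p s t sg j : in_trib sg j = true -> trop_weight p s t sg j = 0.
Proof.
  intros H. unfold trop_weight, expansion_coef. rewrite H.
  rewrite (Rsum_ext _ _ (fun _ => 0)), Rsum_const by (intros; ring). ring.
Qed.

Lemma trop_weight_change_affine N p b h s t sg sg' j :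
  b 0%nat = (1%Z, 0%Z) -> b 1%nat = (0%Z, 1%Z) -> b 2%nat = (0%Z, 0%Z) -> (3 <= N)%nat ->
  H_expansion N p b h s sg -> H_expansion N p b h s sg' -> (j < N)%nat ->
  let nu := trop_weight p s t sg in
  let mu := trop_weight p s t sg' in
  nu j = mu j + IZR (fst (b j)) * (nu 0%nat - mu 0%nat) + IZR (snd (b j)) * (nu 1%nat - mu 1%nat)
         + (1 - IZR (fst (b j)) - IZR (snd (b j))) * (nu 2%nat - mu 2%nat).
Proof.
  intros B0 B1 B2 HN E E' Hj nu mu.
  set (c x k := t k * expansion_coef s sg k x).
  set (c' x k := t k * expansion_coef s sg' k x).
  assert (Hdiff : forall x, nu x - mu x = Rsum p (fun k => c x k + - c' x k))
    by (intros; unfold nu, mu, trop_weight; rewrite Rsum_plus, Rsum_opp; reflexivity).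
  enough (nu j - mu j = IZR (fst (b j)) * (nu 0%nat - mu 0%nat) + IZR (snd (b j)) * (nu 1%nat - mu 1%nat)
         + (1 - IZR (fst (b j)) - IZR (snd (b j))) * (nu 2%nat - mu 2%nat)) by lra.
  rewrite !Hdiff, <- !Rsum_scal, <- !Rsum_plus. apply Rsum_ext. intros k Hk.
  pose proof (expansion_coef_difference_affine N p b h s sg sg' k j B0 B1 B2 HN E E' Hk Hj) as A.
  simpl in A. unfold c, c'.
  transitivity (t k * (expansion_coef s sg k j - expansion_coef s sg' k j)); [ring|].
  rewrite A. ring.
Qed.

Lemma exp_neg_trop_weight_off_triangle p s q sg j eps : eps <= 1 ->
  (forall k, (k < p)%nat -> q k <> RtoC 0 /\ Cmod (q k) < eps) ->
  nondegenerate (p + 3) p s sg ->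
  (forall i, In i (tri_idx sg) -> (i < p + 3)%nat) -> NoDup (tri_idx sg) ->
  (j < p + 3)%nat -> in_trib sg j = false ->
  exp (- trop_weight p s (fun k => - ln (Cmod (q k))) sg j) <= eps.
Proof.
  intros Heps Hq Hnd Hlt Hnodup Hj Hout.
  assert (Hpos : forall k, (k < p)%nat -> 0 < Cmod (q k)) by (intros; apply Cmod_gt_0, Hq; auto).
  assert (Ht : forall k, (k < p)%nat -> 0 <= - ln (Cmod (q k))).
  { intros k Hk. destruct (Hq k Hk) as [_ Hl].
    assert (ln (Cmod (q k)) < 0) by (rewrite <- ln_1; apply ln_increasing; [apply Hpos; auto | lra]).
    lra. }
  destruct (nondegenerate_column_nonzero p s sg j Hnd Hlt Hnodup Hj Hout) as [k0 [Hk0 Hs0]].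
  assert (Hge : - ln (Cmod (q k0)) <= trop_weight p s (fun k => - ln (Cmod (q k))) sg j).
  { unfold trop_weight.
    eapply Rle_trans; [|apply (Rsum_term_le p (fun k => - ln (Cmod (q k)) * expansion_coef s sg k j) k0)].
    - unfold expansion_coef. rewrite Hout.
      assert (1 <= INR (s sg k0 j)) by (apply (le_INR 1); auto).
      pose proof (Ht k0 Hk0). nra.
    - intros k Hk. apply Rmult_le_pos; [auto|]. unfold expansion_coef. rewrite Hout. apply pos_INR.
    - exact Hk0. }
  apply Rle_trans with (exp (ln (Cmod (q k0)))).
  - apply exp_le_mono. lra.
  - rewrite exp_ln by auto. left. apply Hq; auto.
Qed.


Definition dominance_radius (N : nat) (b : nat -> Z * Z) : R :=
  exp (- dual_bound N b) / (4 * INR N).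

Lemma dominance_radius_bounds N b : (0 < N)%nat -> 0 < dominance_radius N b <= 1.
Proof.
  intros HN. unfold dominance_radius, dual_bound.
  assert (HNR : 1 <= INR N) by (apply (le_INR 1); lia).
  assert (Hexp : exp (- (16 * (lattice_size N b * lattice_size N b))) <= 1)
    by (rewrite <- exp_0; apply exp_le_mono; nra).
  pose proof (exp_pos (- (16 * (lattice_size N b * lattice_size N b)))).
  split.
  - apply Rdiv_lt_0_compat; lra.
  - apply Rmult_le_reg_r with (4 * INR N); [lra|].
    unfold Rdiv. rewrite Rmult_assoc, Rinv_l by lra. lra.
Qed.

Lemma exists_dominant_point p b T h s q i :
  mirror_setup p b T h s ->
  (forall k, (k < p)%nat -> q k <> RtoC 0 /\ Cmod (q k) < dominance_radius (p + 3) b) ->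
  (i < p + 3)%nat ->
  exists w, dominant (p + 3) b (coef_a p s q) w i.
Proof.
  intros (B0 & B1 & B2 & _ & (Tlt & Tarea & _ & _ & _ & Tcover) & Hs1 & HT) Hq Hi.
  set (N := (p + 3)%nat) in *.
  set (t k := - ln (Cmod (q k))).
  destruct (Tcover i Hi) as [sg [Hsg Hisg]].
  set (nu := trop_weight p s t sigma1). set (mu := trop_weight p s t sg).
  destruct (unimodular_vertex_choice b sg i (Tarea sg Hsg) Hisg) as (pv & rv & Hpv & Hrv & Hdet & Hvert).
  pose proof (Tlt sg Hsg) as Hsg_lt.
  destruct (unimodular_dual_vector N b i pv rv Hi (Hsg_lt pv Hpv) (Hsg_lt rv Hrv) Hdet)
    as (v & Vp & Vr & VK).
  destruct (dominant_of_weights N b i pv rv nu mu (nu 0%nat - mu 0%nat) (nu 1%nat - mu 1%nat)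
              (nu 2%nat - mu 2%nat) (dual_bound N b) v) as [w Hw]; auto.
  - intros j Hj. apply (trop_weight_change_affine N p b h s t); auto; [unfold N; lia| |];
      [apply (HT _ Hs1) | apply (HT _ Hsg)].
  - apply trop_weight_on_triangle, in_trib_iff; auto.
  - apply trop_weight_on_triangle, in_trib_iff; auto.
  - apply trop_weight_on_triangle, in_trib_iff; auto.
  - intros j Hj Hji Hjp Hjr.
    apply (exp_neg_trop_weight_off_triangle p s q sg j); auto.
    + apply dominance_radius_bounds. unfold N; lia.
    + apply (HT _ Hsg).
    + apply (unimodular_NoDup b), Tarea, Hsg.
    + destruct (in_trib sg j) eqn:E; auto.
      apply in_trib_iff, Hvert in E. intuition.
  - exists w. unfold dominant.
    assert (Hq0 : forall k, (k < p)%nat -> q k <> RtoC 0) by (intros; apply Hq; auto).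
    rewrite (Cmod_coef_a p s q i Hq0).
    rewrite (Rsum_ext _ _ (fun j => if Nat.eqb j i then 0 else exp (- nu j) * exp (rho b w j))); auto.
    intros j _. destruct (Nat.eqb j i); auto. rewrite (Cmod_coef_a p s q j Hq0). reflexivity.
Qed.

Theorem theorem3p3 (p : nat) (b : nat -> Z * Z) (T : list tri)
    (h : nat -> nat -> Q) (s : tri -> nat -> nat -> nat) :
  mirror_setup p b T h s ->
  exists eps : R, (0 < eps)%R /\
    forall q : nat -> C,
      (forall k, (k < p)%nat -> q k <> RtoC 0 /\ (Cmod (q k) < eps)%R) ->
      forall i, (i < p + 3)%nat ->
        exists w : R * R,
          ~ amoeba (p + 3) b (coef_a p s q) w /\
          amoeba_order (p + 3) b (coef_a p s q) w
            = (RtoC (IZR (fst (b i))), RtoC (IZR (snd (b i)))).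
Proof.
  intros Hsetup.
  exists (dominance_radius (p + 3) b). split; [apply dominance_radius_bounds; lia|].
  intros q Hq i Hi.
  destruct (exists_dominant_point p b T h s q i Hsetup Hq Hi) as [w Hw].
  exists w. split.
  - exact (dominant_not_amoeba _ _ _ _ _ Hi Hw).
  - exact (dominant_amoeba_order _ _ _ _ _ Hi Hw).
Qed.
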